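(* Let $G$ be an infinite group. Then (i) $BR_G$ is a translation invariant ideal in $\mathcal{P}_G$; (ii) $BR_G^{\wedge}$ is a closed ideal of the semigroup $\beta G$, and an ultrafilter $p\in\beta G$ belongs to $BR_G^{\wedge}$ if and only if every member $P\in p$ contains an $(n,n)$-rectangle for every $n\in\mathbb{N}$; (iii) $BR_G\subsetneq FT_G$.
   Context: For $X,Y\subseteq G$, the product $XY$ is an $(n,m)$-rectangle if $|X|=n$, $|Y|=m$; a set $A$ has (contains) an $(n,m)$-rectangle if $XY\subseteq A$ for some such $X,Y$. $A$ has bounded rectangles if there is $n\in\mathbb{N}$ such that $A$ contains no $(n,n)$-rectangle; $BR_G$ is the family of such sets. An ideal in $\mathcal{P}_G$ is a family closed under finite unions and subsets not containing $G$; it is translation invariant if $gA,Ag$ belong to it whenever $A$ does. $A$ is $n$-thin if $g_0A\cap\dots\cap g_nA$ is finite for all distinct $g_0,\dots,g_n$; $FT_G$ is the family of sets that are $n$-thin for some $n$. $\beta G$ is the semigroup of ultrafilters on $G$, and $\mathcal{I}^{\wedge}=\{p\in\beta G: G\setminus A\in p$ for each $A\in\mathcal{I}\}$. *)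

From Stdlib Require Import List.
Import ListNotations.
Set Implicit Arguments.

Record Group := {
  carrier :> Type;
  gmul : carrier -> carrier -> carrier;
  gone : carrier;
  ginv : carrier -> carrier;
  gmulA : forall x y z, gmul x (gmul y z) = gmul (gmul x y) z;
  gmul1l : forall x, gmul gone x = x;
  gmul1r : forall x, gmul x gone = x;
  gmulVl : forall x, gmul (ginv x) x = gone;
  gmulVr : forall x, gmul x (ginv x) = gone }.

Section Defs.
Variable G : Group.

Definition gset := G -> Prop.
Definition family := gset -> Prop.

Definition infinite_group : Prop := ~ exists l : list G, forall x : G, In x l.

Definition finite_set (A : gset) : Prop := exists l : list G, forall x, A x -> In x l.

Definition has_card (X : gset) (n : nat) : Prop :=
  exists l : list G, length l = n /\ NoDup l /\ forall x, X x <-> In x l.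

Definition has_rectangle (A : gset) (n m : nat) : Prop :=
  exists X Y : gset, has_card X n /\ has_card Y m /\
    forall x y, X x -> Y y -> A (gmul G x y).

Definition BR (A : gset) : Prop := exists n : nat, ~ has_rectangle A n n.

Definition ltrans (g : G) (A : gset) : gset := fun x => exists a, A a /\ x = gmul G g a.
Definition rtrans (A : gset) (g : G) : gset := fun x => exists a, A a /\ x = gmul G a g.

Definition n_thin (n : nat) (A : gset) : Prop :=
  forall gs : list G, length gs = S n -> NoDup gs ->
    finite_set (fun x => forall g, In g gs -> ltrans g A x).

Definition FT (A : gset) : Prop := exists n : nat, n_thin n A.

Definition full : gset := fun _ => True.
Definition empty : gset := fun _ => False.
Definition compl (A : gset) : gset := fun x => ~ A x.
Definition union (A B : gset) : gset := fun x => A x \/ B x.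
Definition inter (A B : gset) : gset := fun x => A x /\ B x.
Definition subset (A B : gset) : Prop := forall x, A x -> B x.

Definition is_ideal (I : family) : Prop :=
  I empty /\
  (forall A B, I A -> I B -> I (union A B)) /\
  (forall A B, subset B A -> I A -> I B) /\
  ~ I full.

Definition translation_invariant (I : family) : Prop :=
  forall A g, I A -> I (ltrans g A) /\ I (rtrans A g).

Definition ultrafilter (p : family) : Prop :=
  p full /\ ~ p empty /\
  (forall A B, subset A B -> p A -> p B) /\
  (forall A B, p A -> p B -> p (inter A B)) /\
  (forall A, p A \/ p (compl A)).

Definition umul (p q : family) : family :=
  fun A => p (fun x => q (fun y => A (gmul G x y))).

Definition hat (I : family) : family -> Prop :=
  fun p => ultrafilter p /\ forall A, I A -> p (compl A).

(* closed subsets of beta G (Stone topology: basic open sets {q : A ∈ q}) *)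
Definition closed_in_beta (K : family -> Prop) : Prop :=
  (forall p, K p -> ultrafilter p) /\
  forall p, ultrafilter p -> ~ K p ->
    exists A, p A /\ forall q, ultrafilter q -> q A -> ~ K q.

Definition semigroup_ideal (K : family -> Prop) : Prop :=
  (forall p, K p -> ultrafilter p) /\
  (exists p, K p) /\
  forall p q, ultrafilter p -> ultrafilter q ->
    (K p -> K (umul p q)) /\ (K q -> K (umul p q)).

End Defs.

(* If A u B contains a huge rectangle, a Ramsey-type pigeonhole argument (make each of
   2n columns monochromatic on n rows, then keep the n columns of the majority colour)
   yields an (n,n)-rectangle in A or in B; so BR_G is closed under unions, and it is
   clearly closed under translations and subsets.  A set that is not n-thin has n+1
   translates meeting in infinitely many points, which gives an (n,n)-rectangle in A.
   Part (ii) is formal once one knows that {x : x^-1 A in q} has bounded rectangles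
   whenever A does: a rectangle XY in it yields a single z with XYz contained in A.
   For (iii), A is built as a union of m x m rectangles R_m = X_m Y_m, each chosen so
   that no quotient a' a^-1 of two distinct elements of R_0 u ... u R_m with a in R_m
   is a quotient of two elements of R_0 u ... u R_(m-1).  Hence every g <> 1 is a
   quotient of two elements of A in only finitely many ways, i.e. A is 1-thin. *)
From mathcomp Require filter.
From Stdlib Require Import List Arith Lia Classical ClassicalEpsilon FinFun.
Import ListNotations.

Local Infix "•" := (gmul _) (at level 40, left associativity).
Local Notation inv := (ginv _).

Lemma NoDup_sublist {T : Type} {k : nat} {l : list T} :
  NoDup l -> k <= length l -> exists l', length l' = k /\ NoDup l' /\ incl l' l.
Proof.
  intros Hl Hk. exists (firstn k l). rewrite <- (firstn_skipn k l) in Hl.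
  split; [now apply firstn_length_le|split; [exact (NoDup_app_remove_r _ _ Hl)|]].
  intros x Hx. rewrite <- (firstn_skipn k l). apply in_or_app. now left.
Qed.

Lemma NoDup_partition {T : Type} (P : T -> Prop) {l : list T} : NoDup l ->
  exists l1 l2, NoDup l1 /\ NoDup l2 /\ length l1 + length l2 = length l /\
    (forall x, In x l1 -> In x l /\ P x) /\ (forall x, In x l2 -> In x l /\ ~ P x).
Proof.
  intros Hl. set (f x := if excluded_middle_informative (P x) then true else false).
  exists (filter f l), (filter (fun x => negb (f x)) l).
  split; [now apply NoDup_filter|split; [now apply NoDup_filter|split; [apply filter_length|]]].
  split; intros x Hx; apply filter_In in Hx as [Hx Hf]; unfold f in Hf;
    destruct (excluded_middle_informative (P x)); easy.
Qed.

Lemma monochromatic_columns {T U : Type} (C : T -> U -> Prop) (ly : list U) :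
  forall (c : nat) (lx : list T), NoDup lx -> c * 2 ^ length ly <= length lx ->
  exists lx', NoDup lx' /\ incl lx' lx /\ c <= length lx' /\
    forall y, In y ly -> (forall x, In x lx' -> C x y) \/ (forall x, In x lx' -> ~ C x y).
Proof.
  induction ly as [|y ly IH]; intros c lx Hlx Hlen; simpl in Hlen.
  - exists lx. repeat split; auto using incl_refl. lia.
  - destruct (NoDup_partition (fun x => C x y) Hlx) as (l1 & l2 & N1 & N2 & L12 & H1 & H2).
    assert (c * 2 ^ length ly <= length l1 \/ c * 2 ^ length ly <= length l2) as [Hl|Hl]
      by lia.
    + destruct (IH c l1 N1 Hl) as (lx' & Nx & Ix & Lx & Hmono).
      exists lx'. repeat split; auto; [intros x Hx; apply H1, Ix, Hx|].
      intros y' [<-|Hy']; auto. left. intros x Hx. apply H1, Ix, Hx.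
    + destruct (IH c l2 N2 Hl) as (lx' & Nx & Ix & Lx & Hmono).
      exists lx'. repeat split; auto; [intros x Hx; apply H2, Ix, Hx|].
      intros y' [<-|Hy']; auto. right. intros x Hx. apply H2, Ix, Hx.
Qed.

Section BoundedRectangles.
Variable G : Group.
Implicit Types (x y z g : G) (A B : gset G) (p q : family G).

Lemma mulKl x y : inv x • (x • y) = y.
Proof. now rewrite gmulA, gmulVl, gmul1l. Qed.

Lemma mulVKl x y : x • (inv x • y) = y.
Proof. now rewrite gmulA, gmulVr, gmul1l. Qed.

Lemma mulKr x y : x • y • inv y = x.
Proof. now rewrite <- gmulA, gmulVr, gmul1r. Qed.

Lemma mulVKr x y : x • inv y • y = x.
Proof. now rewrite <- gmulA, gmulVl, gmul1r. Qed.

Lemma mulIl g : Injective (gmul G g).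
Proof. intros x y E. now rewrite <- (mulKl g x), <- (mulKl g y), E. Qed.

Lemma mulIr g : Injective (fun x => x • g).
Proof. intros x y E. now rewrite <- (mulKr x g), <- (mulKr y g); simpl in E; rewrite E. Qed.

Lemma inv_unique x y : x • y = gone G -> y = inv x.
Proof. intros E. apply (mulIl x). now rewrite E, gmulVr. Qed.

Lemma invM x y : inv (x • y) = inv y • inv x.
Proof.
  symmetry. apply inv_unique.
  now rewrite gmulA, <- (gmulA _ x y), gmulVr, gmul1r, gmulVr.
Qed.

Lemma invK x : inv (inv x) = x.
Proof. symmetry. apply inv_unique, gmulVl. Qed.

Lemma invI : Injective (ginv G).
Proof. intros x y E. now rewrite <- (invK x), E, invK. Qed.

Lemma inv_mulV x y : inv (x • inv y) = y • inv x.
Proof. now rewrite invM, invK. Qed.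

Lemma infinite_group_full : infinite_group G -> ~ finite_set (full G).
Proof. intros HG [l Hl]. apply HG. exists l. intros x. now apply Hl. Qed.

Lemma infinite_set_avoid {Z : gset G} : ~ finite_set Z ->
  forall l, exists z, Z z /\ ~ In z l.
Proof.
  intros HZ l. apply NNPP. intros H. apply HZ. exists l. intros x Hx.
  apply NNPP. intros Hl. apply H. now exists x.
Qed.

Lemma infinite_set_elems {Z : gset G} : ~ finite_set Z ->
  forall k, exists l, length l = k /\ NoDup l /\ forall z, In z l -> Z z.
Proof.
  intros HZ k. induction k as [|k (l & Ll & Nl & Hl)].
  - exists []. repeat split; [constructor|intros z []].
  - destruct (infinite_set_avoid HZ l) as (z & Hz & Hzl).
    exists (z :: l). repeat split; [simpl; auto|constructor; auto|].
    intros x [<-|Hx]; auto.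
Qed.

Lemma has_rectangleE A n m : has_rectangle A n m ->
  exists lx ly, length lx = n /\ NoDup lx /\ length ly = m /\ NoDup ly /\
    forall x y, In x lx -> In y ly -> A (x • y).
Proof.
  intros (X & Y & (lx & Lx & Nx & HX) & (ly & Ly & Ny & HY) & H).
  exists lx, ly. repeat split; auto. intros x y Hx Hy. apply H; [apply HX|apply HY]; auto.
Qed.

Lemma has_rectangle_lists A n m lx ly : NoDup lx -> NoDup ly ->
  n <= length lx -> m <= length ly -> (forall x y, In x lx -> In y ly -> A (x • y)) ->
  has_rectangle A n m.
Proof.
  intros Nx Ny Hn Hm H.
  destruct (NoDup_sublist Nx Hn) as (lx' & Lx & Nx' & Ix).
  destruct (NoDup_sublist Ny Hm) as (ly' & Ly & Ny' & Iy).
  exists (fun x => In x lx'), (fun y => In y ly').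
  split; [exists lx'; repeat split; tauto|split; [exists ly'; repeat split; tauto|]].
  intros x y Hx Hy. apply H; auto.
Qed.

Lemma has_rectangle_le {A n m n' m'} :
  has_rectangle A n m -> n' <= n -> m' <= m -> has_rectangle A n' m'.
Proof.
  intros H Hn Hm. apply has_rectangleE in H as (lx & ly & Lx & Nx & Ly & Ny & H).
  apply (has_rectangle_lists A n' m' lx ly); auto; lia.
Qed.

Lemma has_rectangle_subset {A B n m} : subset A B -> has_rectangle A n m -> has_rectangle B n m.
Proof. intros HAB (X & Y & HX & HY & H). exists X, Y. auto. Qed.

Lemma has_rectangle_map {A B} {f h : G -> G} {n m} : Injective f -> Injective h ->
  (forall x y, A (x • y) -> B (f x • h y)) -> has_rectangle A n m -> has_rectangle B n m.
Proof.
  intros Hf Hh HAB H. apply has_rectangleE in H as (lx & ly & Lx & Nx & Ly & Ny & H).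
  apply (has_rectangle_lists B n m (map f lx) (map h ly));
    try (now apply Injective_map_NoDup); try (rewrite length_map; lia).
  intros x y Hx Hy. apply in_map_iff in Hx as (x' & <- & Hx). apply in_map_iff in Hy as (y' & <- & Hy).
  auto.
Qed.

Lemma has_rectangle_union {A B n} :
  has_rectangle (union A B) (n * 2 ^ (2 * n) + 2 * n) (n * 2 ^ (2 * n) + 2 * n) ->
  has_rectangle A n n \/ has_rectangle B n n.
Proof.
  intros H. apply has_rectangleE in H as (lx & ly & Lx & Nx & Ly & Ny & HAB).
  destruct (NoDup_sublist (k := 2 * n) Ny) as (ly' & Ly' & Ny' & Iy'); [lia|].
  destruct (monochromatic_columns (fun x y => A (x • y)) ly' n lx Nx) as (lx' & Nx' & Ix' & Lx' & Hmono);
    [rewrite Ly'; lia|].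
  destruct (NoDup_partition (fun y => forall x, In x lx' -> A (x • y)) Ny')
    as (l1 & l2 & N1 & N2 & L12 & H1 & H2).
  assert (n <= length l1 \/ n <= length l2) as [Hl|Hl] by lia.
  - left. apply (has_rectangle_lists A n n lx' l1); auto.
    intros x y Hx Hy. now apply (H1 y Hy).
  - right. apply (has_rectangle_lists B n n lx' l2); auto.
    intros x y Hx Hy. destruct (H2 y Hy) as [Hy' HnA].
    destruct (Hmono y Hy') as [HA|HnA']; [contradiction|].
    destruct (HAB x y (Ix' x Hx) (Iy' y Hy')) as [HAxy|HBxy]; [|exact HBxy].
    exfalso. exact (HnA' x Hx HAxy).
Qed.

Lemma BR_subset {A B} : subset B A -> BR A -> BR B.
Proof. intros HBA [n Hn]. exists n. intros H. apply Hn. exact (has_rectangle_subset HBA H). Qed.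

Lemma BR_empty : BR (empty G).
Proof.
  exists 1. intros H. apply has_rectangleE in H as ([|x lx] & [|y ly] & Lx & _ & Ly & _ & H);
    try discriminate. apply (H x y); now left.
Qed.

Lemma not_BR_full : infinite_group G -> ~ BR (full G).
Proof.
  intros HG [n Hn]. apply Hn.
  destruct (infinite_set_elems (infinite_group_full HG) n) as (l & Ll & Nl & _).
  apply (has_rectangle_lists _ n n l l); auto; try lia. now intros.
Qed.

Lemma BR_union {A B} : BR A -> BR B -> BR (union A B).
Proof.
  intros [n HA] [m HB]. set (t := n + m). exists (t * 2 ^ (2 * t) + 2 * t). intros H.
  destruct (has_rectangle_union H) as [H'|H'].
  - apply HA. apply (has_rectangle_le H'); unfold t; lia.
  - apply HB. apply (has_rectangle_le H'); unfold t; lia.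
Qed.

Lemma BR_map {A B} {f h : G -> G} : Injective f -> Injective h ->
  (forall x y, B (x • y) -> A (f x • h y)) -> BR A -> BR B.
Proof.
  intros Hf Hh HBA [n Hn]. exists n. intros H. apply Hn. exact (has_rectangle_map Hf Hh HBA H).
Qed.

Lemma injective_id : Injective (fun x : G => x).
Proof. now intros x y. Qed.

Lemma BR_ltrans A g : BR A -> BR (ltrans g A).
Proof.
  apply (BR_map (mulIl (inv g)) injective_id). intros x y (a & Ha & E).
  now rewrite <- gmulA, E, mulKl.
Qed.

Lemma BR_rtrans A g : BR A -> BR (rtrans A g).
Proof.
  apply (BR_map injective_id (mulIr (inv g))). intros x y (a & Ha & E).
  now rewrite gmulA, E, mulKr.
Qed.

Lemma BR_shift {A} x : BR A -> BR (fun y => A (x • y)).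
Proof. apply (BR_map (mulIl x) injective_id). intros u v. now rewrite gmulA. Qed.

Lemma BR_ideal : infinite_group G -> is_ideal (@BR G).
Proof.
  intros HG. repeat split.
  - exact BR_empty.
  - exact @BR_union.
  - exact @BR_subset.
  - exact (not_BR_full HG).
Qed.

Lemma BR_translation_invariant : translation_invariant (@BR G).
Proof. split; [apply BR_ltrans|apply BR_rtrans]; assumption. Qed.

Lemma BR_FT A : BR A -> FT A.
Proof.
  intros [n Hn]. exists n. intros gs Lgs Ngs. apply NNPP. intros Hinf.
  destruct (infinite_set_elems Hinf n) as (l & Ll & Nl & Hl).
  apply Hn, (has_rectangle_lists A n n (map inv gs) l); auto.
  - exact (Injective_map_NoDup invI Ngs).
  - rewrite length_map. lia.
  - lia.
  - intros x z Hx Hz. apply in_map_iff in Hx as (g & <- & Hg).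
    destruct (Hl z Hz g Hg) as (a & Ha & ->). now rewrite mulKl.
Qed.

(** * Ultrafilters *)

Section Ultrafilter.
Context {p : family G} (Hp : ultrafilter p).

Lemma ultrafilter_subset {A B} : subset A B -> p A -> p B.
Proof. destruct Hp as (_ & _ & Hsub & _ & _). apply Hsub. Qed.

Lemma ultrafilter_compl {A} : ~ p A -> p (compl A).
Proof. destruct Hp as (_ & _ & _ & _ & Hcompl). now destruct (Hcompl A). Qed.

Lemma ultrafilter_nonempty {A} : p A -> exists x, A x.
Proof.
  intros HA. apply NNPP. intros Hno. destruct Hp as (_ & H0 & _ & _ & _). apply H0.
  apply (ultrafilter_subset (A := A)); auto. intros x Hx. apply Hno. now exists x.
Qed.

Lemma ultrafilter_not_compl {A} : p A -> ~ p (compl A).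
Proof.
  intros HA HC. destruct Hp as (_ & _ & _ & Hinter & _).
  destruct (ultrafilter_nonempty (Hinter A (compl A) HA HC)) as (x & Hx & Hnx). auto.
Qed.

Lemma ultrafilter_list_inter (I : Type) (l : list I) (P : I -> gset G) :
  (forall i, In i l -> p (P i)) -> p (fun z => forall i, In i l -> P i z).
Proof.
  destruct Hp as (Hfull & _ & _ & Hinter & _). induction l as [|i l IH]; intros H.
  - apply (ultrafilter_subset (A := full G)); auto. intros x _ i [].
  - apply (ultrafilter_subset (A := inter (P i) (fun z => forall j, In j l -> P j z))).
    + intros x [Hx Hl] j [<-|Hj]; auto.
    + apply Hinter; [apply H; now left|apply IH; intros j Hj; apply H; now right].
Qed.

End Ultrafilter.

Lemma umul_ultrafilter p q : ultrafilter p -> ultrafilter q -> ultrafilter (umul p q).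
Proof.
  intros Hp Hq. pose proof Hp as (P1 & P2 & P3 & P4 & P5). pose proof Hq as (Q1 & Q2 & Q3 & Q4 & Q5).
  unfold umul. repeat split.
  - apply (P3 (full G)); [intros x _; exact Q1|exact P1].
  - intros H. apply P2. refine (P3 _ _ _ H). intros x Hx. exact (Q2 Hx).
  - intros A B HAB H. refine (P3 _ _ _ H). intros x. apply Q3. intros y. apply HAB.
  - intros A B HA HB. refine (P3 _ _ _ (P4 _ _ HA HB)). intros x [Hx Hx']. now apply Q4.
  - intros A. destruct (P5 (fun x => q (fun y => A (x • y)))) as [H|H]; [now left|right].
    refine (P3 _ _ _ H). intros x Hx. exact (ultrafilter_compl Hq Hx).
Qed.

Lemma ultrafilter_extension (F : family G) :
  F (full G) -> ~ F (empty G) -> (forall A B, F A -> F B -> F (inter A B)) ->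
  (forall A B, subset A B -> F A -> F B) -> exists p, ultrafilter p /\ forall A, F A -> p A.
Proof.
  intros Ffull Fempty Finter Fsub.
  assert (PF : filter.ProperFilter F) by (constructor; [exact Fempty|constructor; auto]).
  destruct (filter.ultraFilterLemma PF) as (U & UU & FU).
  pose proof (filter.filter_filter (F := U)) as UF.
  exists U. repeat split; [|exact (@filter.filter_not_empty _ U (@filter.ultra_proper _ _ UU))| | | |exact FU].
  - exact (@filter.filterT _ _ UF).
  - intros A B. apply (@filter.filterS _ _ UF).
  - intros A B. apply (@filter.filterI _ _ UF).
  - intros A. exact (filter.in_ultra_setVsetC A UU).
Qed.

Lemma hat_BR_closed : closed_in_beta (hat (@BR G)).
Proof.
  split; [now intros p []|]. intros p Hp Hnot.
  assert (exists A, BR A /\ ~ p (compl A)) as (A & HA & HpA).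
  { apply NNPP. intros Hno. apply Hnot. split; auto. intros A HA.
    apply NNPP. intros HpA. apply Hno. now exists A. }
  exists A. split.
  - apply NNPP. intros HnA. exact (HpA (ultrafilter_compl Hp HnA)).
  - intros q Hq HqA [_ Hhat]. exact (ultrafilter_not_compl Hq HqA (Hhat A HA)).
Qed.

Lemma hat_BR_iff p : ultrafilter p ->
  (hat (@BR G) p <-> forall P, p P -> forall n, has_rectangle P n n).
Proof.
  intros Hp. split.
  - intros [_ Hhat] P HP n. apply NNPP. intros Hn.
    exact (ultrafilter_not_compl Hp HP (Hhat P (ex_intro _ n Hn))).
  - intros H. split; auto. intros A [n Hn]. apply (ultrafilter_compl Hp).
    intros HA. exact (Hn (H A HA n)).
Qed.

Lemma BR_umul_set {q A} : ultrafilter q -> BR A -> BR (fun x => q (fun y => A (x • y))).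
Proof.
  intros Hq [n Hn]. exists n. intros H. apply Hn.
  apply has_rectangleE in H as (lx & ly & Lx & Nx & Ly & Ny & H).
  assert (Hz : q (fun z => forall xy, In xy (list_prod lx ly) -> A (fst xy • snd xy • z))).
  { apply ultrafilter_list_inter; auto. intros [x y] Hxy.
    apply in_prod_iff in Hxy as [Hx Hy]. exact (H x y Hx Hy). }
  destruct (ultrafilter_nonempty Hq Hz) as (z & Hxyz).
  apply (has_rectangle_lists A n n lx (map (fun y => y • z) ly)); auto.
  - exact (Injective_map_NoDup (mulIr z) Ny).
  - lia.
  - rewrite length_map. lia.
  - intros x y Hx Hy. apply in_map_iff in Hy as (y' & <- & Hy).
    rewrite gmulA. apply (Hxyz (x, y')). now apply in_prod.
Qed.

Lemma hat_BR_nonempty : infinite_group G -> exists p, hat (@BR G) p.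
Proof.
  intros HG. destruct (ultrafilter_extension (fun A => BR (compl A))) as (p & Hp & HF).
  - apply (BR_subset (A := empty G)); [now intros x Hx; apply Hx|exact BR_empty].
  - intros H. apply (not_BR_full HG). refine (BR_subset _ H). intros x _ Hx. exact Hx.
  - intros A B HA HB. refine (BR_subset _ (BR_union HA HB)).
    intros x Hx. destruct (classic (A x)) as [HAx|HAx]; [right|left]; intros Hx'; [exact (Hx (conj HAx Hx'))|exact (HAx Hx')].
  - intros A B HAB HA. refine (BR_subset _ HA). intros x Hx HAx. exact (Hx (HAB x HAx)).
  - exists p. split; auto. intros A HA. apply HF. refine (BR_subset _ HA). intros x Hx. exact (NNPP _ Hx).
Qed.

Lemma hat_BR_semigroup_ideal : infinite_group G -> semigroup_ideal (hat (@BR G)).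
Proof.
  intros HG. split; [now intros p []|split; [exact (hat_BR_nonempty HG)|]].
  intros p q Hp Hq. split; intros [_ Hhat]; split; try (now apply umul_ultrafilter);
    intros A HA; unfold umul.
  - refine (ultrafilter_subset Hp _ (Hhat _ (BR_umul_set Hq HA))).
    intros x Hx. exact (ultrafilter_compl Hq Hx).
  - apply (ultrafilter_subset Hp (A := full G)); [|now destruct Hp].
    intros x _. exact (Hhat _ (BR_shift x HA)).
Qed.

(** * A 1-thin set containing arbitrarily large square rectangles *)

Definition prods (X Y : list G) : list G := flat_map (fun y => map (fun x => x • y) X) Y.
Definition quots (S : list G) : list G := flat_map (fun b => map (fun b' => b' • inv b) S) S.

Lemma In_prods X Y a : In a (prods X Y) <-> exists x y, In x X /\ In y Y /\ a = x • y.
Proof.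
  unfold prods. rewrite in_flat_map. split.
  - intros (y & Hy & Ha). apply in_map_iff in Ha as (x & <- & Hx). now exists x, y.
  - intros (x & y & Hx & Hy & ->). exists y. split; auto. apply in_map_iff. now exists x.
Qed.

Lemma In_quots S e : In e (quots S) <-> exists b b', In b S /\ In b' S /\ e = b' • inv b.
Proof.
  unfold quots. rewrite in_flat_map. split.
  - intros (b & Hb & He). apply in_map_iff in He as (b' & <- & Hb'). now exists b, b'.
  - intros (b & b' & Hb & Hb' & ->). exists b. split; auto. apply in_map_iff. now exists b'.
Qed.

Definition inv_closed (Q : list G) : Prop := forall e, In e Q -> In (inv e) Q.

Lemma quots_inv_closed S : inv_closed (quots S).
Proof.
  intros e He. apply In_quots in He as (b & b' & Hb & Hb' & ->).
  rewrite inv_mulV. apply In_quots. now exists b', b.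
Qed.

Definition quot_free (Q X : list G) : Prop :=
  NoDup X /\ forall x x', In x X -> In x' X -> x <> x' -> ~ In (x' • inv x) Q.

Definition separated (Q S R : list G) : Prop :=
  forall a a', In a R -> In a' (S ++ R) -> a <> a' -> ~ In (a' • inv a) Q.

Section Extension.
Hypothesis HG : infinite_group G.
Context {Q : list G} (HQ : inv_closed Q).

Lemma fresh_elem (l : list G) : exists x, ~ In x l.
Proof. destruct (infinite_set_avoid (infinite_group_full HG) l) as (x & _ & Hx). now exists x. Qed.

(* a new point x may join X unless x lies in X or in Q X *)
Lemma quot_free_exists m : exists X, length X = m /\ quot_free Q X.
Proof.
  induction m as [|m (X & LX & NX & HX)].
  - exists []. split; auto. split; [constructor|intros x x' []].
  - destruct (fresh_elem (X ++ prods Q X)) as [x Hx].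
    assert (Hfresh : forall u, In u X -> ~ In (x • inv u) Q).
    { intros u Hu HQu. apply Hx, in_or_app. right. apply In_prods.
      exists (x • inv u), u. now rewrite mulVKr. }
    exists (x :: X). split; [simpl; auto|split].
    + constructor; auto. intros HxX. apply Hx, in_or_app. now left.
    + intros u u' [<-|Hu] [<-|Hu'] Hne HD; try contradiction.
      * apply (Hfresh u' Hu'). rewrite <- inv_mulV. now apply HQ.
      * exact (Hfresh u Hu HD).
      * exact (HX u u' Hu Hu' Hne HD).
Qed.

(* a new column y may join Y unless y lies in Y or in X^-1 Q (S u XY) *)
Lemma separated_exists S {X} : quot_free Q X ->
  forall k, exists Y, length Y = k /\ NoDup Y /\ separated Q S (prods X Y).
Proof.
  intros [NX HX] k. induction k as [|k (Y & LY & NY & HY)].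
  - exists []. repeat split; [constructor|]. intros a a' [].
  - destruct (fresh_elem (Y ++ prods (prods (map inv X) Q) (S ++ prods X Y))) as [y Hy].
    assert (Hfresh : forall x b, In x X -> In b (S ++ prods X Y) -> ~ In (b • inv (x • y)) Q).
    { intros x b Hx Hb HQb. apply Hy, in_or_app. right. apply In_prods.
      exists (inv x • (x • y • inv b)), b. split; [|split; auto].
      - apply In_prods. exists (inv x), (x • y • inv b). split; [now apply in_map|].
        split; [|reflexivity]. rewrite <- inv_mulV. now apply HQ.
      - now rewrite gmulA, mulKl, mulVKr. }
    exists (y :: Y). split; [simpl; auto|split].
    + constructor; auto. intros HyY. apply Hy, in_or_app. now left.
    + change (prods X (y :: Y)) with (map (fun x => x • y) X ++ prods X Y).
      intros a a' Ha Ha' Hne HD. rewrite !in_app_iff, in_map_iff in *.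
      destruct Ha as [(x & <- & Hx)|Ha]; destruct Ha' as [Ha'|[(x' & <- & Hx')|Ha']].
      * apply (Hfresh x a'); auto. now apply in_or_app; left.
      * apply (HX x x' Hx Hx'); [intros ->; now apply Hne|].
        now rewrite invM, gmulA, mulKr in HD.
      * apply (Hfresh x a'); auto. now apply in_or_app; right.
      * exact (HY a a' Ha (in_or_app _ _ _ (or_introl Ha')) Hne HD).
      * apply (Hfresh x' a); [auto|now apply in_or_app; right|].
        rewrite <- inv_mulV. now apply HQ.
      * exact (HY a a' Ha (in_or_app _ _ _ (or_intror Ha')) Hne HD).
Qed.

End Extension.

Section Example.
Hypothesis HG : infinite_group G.

Lemma block_exists S m :
  exists R, separated (quots S) S R /\ has_rectangle (fun a => In a R) m m.
Proof.
  destruct (quot_free_exists HG (quots_inv_closed S) m) as (X & LX & HX).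
  destruct (separated_exists HG (quots_inv_closed S) S HX m) as (Y & LY & NY & HY).
  exists (prods X Y). split; auto.
  apply (has_rectangle_lists _ m m X Y); [apply HX|auto|lia|lia|].
  intros x y Hx Hy. apply In_prods. now exists x, y.
Qed.

Definition block (S : list G) (m : nat) : list G :=
  proj1_sig (constructive_indefinite_description _ (block_exists S m)).

Lemma block_spec S m :
  separated (quots S) S (block S m) /\ has_rectangle (fun a => In a (block S m)) m m.
Proof. unfold block. now destruct (constructive_indefinite_description _ _). Qed.

Fixpoint stage (m : nat) : list G :=
  match m with
  | 0 => []
  | S m => stage m ++ block (stage m) m
  end.

Definition thin_unbounded_set : gset G := fun a => exists m, In a (block (stage m) m).

Lemma stage_incl {k m} : k <= m -> incl (stage k) (stage m).
Proof. induction 1; [apply incl_refl|]. intros x Hx. apply in_or_app. auto. Qed.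

Lemma block_incl_stage {m} : incl (block (stage m) m) (stage (S m)).
Proof. intros x Hx. apply in_or_app. auto. Qed.

Lemma thin_unbounded_set_rectangle n : has_rectangle thin_unbounded_set n n.
Proof.
  apply (has_rectangle_subset (A := fun a => In a (block (stage n) n))).
  - intros a Ha. now exists n.
  - apply block_spec.
Qed.

(* m is the later of the two steps at which a and a' were added *)
Lemma thin_unbounded_set_pair_level {a a'} : thin_unbounded_set a -> thin_unbounded_set a' -> a <> a' ->
  exists m, In a (stage (S m)) /\ In a' (stage (S m)) /\ ~ In (a' • inv a) (quots (stage m)).
Proof.
  intros [i Hi] [j Hj] Hne. destruct (Nat.le_ge_cases i j) as [Hij|Hji].
  - exists j. pose proof (stage_incl (le_n_S _ _ Hij) _ (block_incl_stage _ Hi)) as Ha.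
    split; [exact Ha|split; [now apply block_incl_stage|]]. intros HD.
    apply ((proj1 (block_spec (stage j) j)) a' a Hj Ha (not_eq_sym Hne)).
    rewrite <- inv_mulV. now apply quots_inv_closed.
  - exists i. pose proof (stage_incl (le_n_S _ _ Hji) _ (block_incl_stage _ Hj)) as Ha'.
    split; [now apply block_incl_stage|split; [exact Ha'|]].
    exact ((proj1 (block_spec (stage i) i)) a a' Hi Ha' Hne).
Qed.

Lemma quots_stage_later {b b' k m} : In b (stage (S k)) -> In b' (stage (S k)) -> k < m ->
  In (b' • inv b) (quots (stage m)).
Proof. intros Hb Hb' Hk. apply In_quots. exists b, b'. split; [|split]; auto; now apply (stage_incl Hk). Qed.

Lemma ltrans_common_point {A g0 g1 x} : g0 <> g1 -> ltrans g0 A x -> ltrans g1 A x ->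
  exists a a', A a /\ A a' /\ a <> a' /\ x = g0 • a /\ a' • inv a = inv g1 • g0.
Proof.
  intros Hg (a & Ha & E0) (a' & Ha' & E1). exists a, a'. repeat split; auto.
  - intros <-. apply Hg, (mulIr a). simpl. congruence.
  - rewrite <- (mulKl g1 a'), <- E1, <- (mulKl g0 a), <- E0, invM, invK, <- gmulA.
    now rewrite mulVKl.
Qed.

Lemma thin_unbounded_set_thin : n_thin 1 thin_unbounded_set.
Proof.
  intros [|g0 [|g1 [|? ?]]] Lgs Ngs; try discriminate.
  assert (Hg : g0 <> g1) by (intros <-; inversion Ngs as [|? ? Hnin]; now apply Hnin; left).
  destruct (classic (exists x0, ltrans g0 thin_unbounded_set x0 /\ ltrans g1 thin_unbounded_set x0))
    as [(x0 & Hx0 & Hx0')|Hempty].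
  2: { exists []. intros x Hx. apply Hempty. exists x. split; apply Hx; simpl; auto. }
  destruct (ltrans_common_point Hg Hx0 Hx0') as (a0 & a0' & Ha0 & Ha0' & Hne0 & _ & E0).
  destruct (thin_unbounded_set_pair_level Ha0 Ha0' Hne0) as (m0 & Hb0 & Hb0' & _).
  exists (map (gmul G g0) (stage (S m0))). intros x Hx.
  destruct (ltrans_common_point Hg (Hx g0 (or_introl eq_refl)) (Hx g1 (or_intror (or_introl eq_refl))))
    as (a & a' & Ha & Ha' & Hne & -> & E).
  destruct (thin_unbounded_set_pair_level Ha Ha' Hne) as (m & Hb & _ & Hnew).
  apply in_map. destruct (Nat.le_gt_cases m m0) as [Hm|Hm].
  - exact (stage_incl (le_n_S _ _ Hm) _ Hb).
  - exfalso. apply Hnew. rewrite E, <- E0. exact (quots_stage_later Hb0 Hb0' Hm).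
Qed.

Lemma FT_not_BR : exists A, FT A /\ ~ BR A.
Proof.
  exists thin_unbounded_set. split; [now exists 1; apply thin_unbounded_set_thin|].
  intros [n Hn]. exact (Hn (thin_unbounded_set_rectangle n)).
Qed.

End Example.
End BoundedRectangles.

Theorem theorem6p7 (G : Group) (HG : infinite_group G) :
  (is_ideal (@BR G) /\ translation_invariant (@BR G)) /\
  (closed_in_beta (hat (@BR G)) /\ semigroup_ideal (hat (@BR G)) /\
   forall p : family G, ultrafilter p ->
     (hat (@BR G) p <-> forall P : gset G, p P -> forall n : nat, has_rectangle P n n)) /\
  ((forall A : gset G, BR A -> FT A) /\ exists A : gset G, FT A /\ ~ BR A).
Proof.
  split; [split|split; [split; [|split]|split]].
  - exact (BR_ideal G HG).
  - exact (BR_translation_invariant G).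
  - exact (hat_BR_closed G).
  - exact (hat_BR_semigroup_ideal G HG).
  - exact (hat_BR_iff G).
  - exact (BR_FT G).
  - exact (FT_not_BR G HG).
Qed.
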